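(* Let $D,D'\in\mathcal{D}_1$ be persistence measures. Then \[ \|\beta_k(D)-\beta_k(D')\|_{L^1(\mathbb{R})}\le 2\,d_1(D,D'). \]
   Context: $\overline{\mathcal{X}}=\{(x,y)\in\mathbb{R}^2:y\le x\}$, $\mathcal{X}=\{y<x\}$, $\Delta$ the diagonal. $\mathbb{R}^2$ carries the metric $d_\infty((x,y),(x',y'))=\max\{|x-x'|,|y-y'|\}$, and $d_\infty((x,y),\Delta)=\frac12|y-x|$. $\mathcal{D}_1$ is the set of Radon measures $\mu$ on $\overline{\mathcal{X}}$ with $\int d_\infty(z,\Delta)\,d\mu(z)<\infty$. $d_1(\mu,\nu)=\inf_\pi\int_{\overline{\mathcal{X}}^2}d_\infty(z,w)\,d\pi(z,w)$ over Radon measures $\pi$ on $\overline{\mathcal{X}}^2$ with $\pi(A\times\overline{\mathcal{X}})=\mu(A)$ and $\pi(\overline{\mathcal{X}}\times B)=\nu(B)$ for all Borel $A,B\subset\mathcal{X}$. For $x\in\mathbb{R}$, $R_x=[x,\infty[\times]-\infty,x]$, and for a persistence measure $D$, $\beta_k(D)(x)=D(R_x)$ (the index $k$ refers to the homological degree the diagram comes from). *)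

From HB Require Import structures.
From mathcomp Require Import all_boot all_order all_algebra.
From mathcomp Require Import all_classical all_reals all_analysis.
Set Implicit Arguments. Unset Strict Implicit. Unset Printing Implicit Defensive.
Import Order.TTheory GRing.Theory Num.Theory.
Import numFieldNormedType.Exports.
Local Open Scope classical_set_scope.
Local Open Scope ring_scope.

Section Persistence.
Variable R : realType.

Definition Xbar : set (R * R) := [set z | z.2 <= z.1].
Definition Xopen : set (R * R) := [set z | z.2 < z.1].

Definition dinf (z w : R * R) : R := Num.max `|z.1 - w.1| `|z.2 - w.2|.
Definition ddiag (z : R * R) : R := `|z.2 - z.1| / 2.

(* Radon measure on Xbar: a Borel measure on R^2 (product sigma-algebra =
   Borel sigma-algebra of R^2) carried by Xbar and finite on compact sets
   (locally finite Borel measures on R^n are automatically regular). *)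

Definition is_radon_Xbar (mu : {measure set (R * R) -> \bar R}) : Prop :=
  mu (~` Xbar) = 0%E /\
  (forall K : set (R * R), compact K -> (mu K < +oo)%E).

Definition in_D1 (mu : {measure set (R * R) -> \bar R}) : Prop :=
  is_radon_Xbar mu /\
  (\int[mu]_(z in Xbar) (ddiag z)%:E < +oo)%E.

Definition Xbar2 : set ((R * R) * (R * R)) := Xbar `*` Xbar.

Definition plan (mu nu : {measure set (R * R) -> \bar R})
  (pi : {measure set ((R * R) * (R * R)) -> \bar R}) : Prop :=
  pi (~` Xbar2) = 0%E /\
  (forall K : set ((R * R) * (R * R)), compact K -> (pi K < +oo)%E) /\
  (forall A : set (R * R), measurable A -> A `<=` Xopen ->
     pi (A `*` Xbar) = mu A) /\
  (forall B : set (R * R), measurable B -> B `<=` Xopen ->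
     pi (Xbar `*` B) = nu B).

Definition d1 (mu nu : {measure set (R * R) -> \bar R}) : \bar R :=
  ereal_inf [set c | exists pi, plan mu nu pi /\
     c = (\int[pi]_(w in Xbar2) (dinf w.1 w.2)%:E)%E].

Definition Rx (x : R) : set (R * R) := `[x, +oo[%classic `*` `]-oo, x]%classic.

Definition betti (D : {measure set (R * R) -> \bar R}) (x : R) : \bar R :=
  D (Rx x).

End Persistence.

(* Fix a transport plan pi between D and D'.  Off the diagonal, the masses
   that D and D' give to R_x differ by at most the pi-mass of the pairs (z, w)
   with exactly one point in R_x.  For a fixed pair, the x with that property
   lie in two segments of lengths |z.1 - w.1| and |z.2 - w.2|, so they have
   Lebesgue measure at most 2 d_inf(z, w); Tonelli turns this into the bound
   2 \int d_inf dpi, and one takes the infimum over pi.  Plans only constrain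
   subsets of the open half-plane, so R_x is split into R_x /\ X and the
   diagonal point (x, x), whose mass integrates to 0 in x, by Tonelli again. *)

From HB Require Import structures.
From mathcomp Require Import all_boot all_order all_algebra.
From mathcomp Require Import all_classical all_reals all_analysis.
From mathcomp Require Import measurable_realfun lra.
Import Order.TTheory GRing.Theory Num.Theory.
Import numFieldNormedType.Exports.
Set Implicit Arguments. Unset Strict Implicit. Unset Printing Implicit Defensive.
Local Open Scope classical_set_scope.
Local Open Scope ring_scope.

Lemma lee_dist (R : realDomainType) (u v c : \bar R) :
  u \is a fin_num -> v \is a fin_num -> (u <= v + c -> v <= u + c -> `|u - v| <= c)%E.
Proof.
move: u v c => [u| |] // [v| |] // [c| |] //= _ _; rewrite ?leey // !lee_fin.
by move=> uv vu; rewrite ler_norml; apply/andP; split; lra.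
Qed.

Section measure_complements.
Local Open Scope ereal_scope.
Context d (T : measurableType d) (R : realType).

Lemma measurable_preimageT d' (U : measurableType d') (B : set U) (f : T -> U) :
  measurable_fun setT f -> measurable B -> measurable (f @^-1` B).
Proof. by move=> mf mB; rewrite -[_ @^-1` _]setTI; exact: mf. Qed.

Lemma measurable_bool (b : T -> bool) : measurable_fun setT b -> measurable [set x | b x].
Proof. by move=> mb; apply: (measurable_preimageT mb). Qed.

Lemma le_ge0_integral (mu : {measure set T -> \bar R}) (f g : T -> \bar R) :
  (forall x, 0 <= f x) -> (forall x, f x <= g x) ->
  \int[mu]_x f x <= \int[mu]_x g x.
Proof.
move=> f0 fg; have g0 x : 0 <= g x by exact: le_trans (f0 x) (fg x).
rewrite !ge0_integralTE//; apply: ge_ereal_sup => _ [h hf <-].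
by apply: ereal_sup_ubound; exists h => // x; exact: le_trans (hf x) (fg x).
Qed.

Lemma measure_le_addY (mu : {measure set T -> \bar R}) (A B : set T) :
  measurable A -> measurable B -> mu A <= mu B + mu (A `+` B).
Proof.
move=> mA mB; rewrite (measureDI mu mA mB) addeC.
apply: leeD; apply: le_measure; rewrite ?inE //.
- exact: measurableI.
- exact: measurableD.
- by apply: measurableU; exact: measurableD.
- exact: subsetUl.
Qed.

End measure_complements.

Section sigma_finite_measure_of.
Context d (T : measurableType d) (R : realType).
Variables (mu : {measure set T -> \bar R}) (mu_sf : sigma_finite setT mu).

(* [mu_sf] occurs in the body so that it stays a parameter of [sfmeasure],
   as the sigma-finite instance below needs it *)
Definition sfmeasure : set T -> \bar R := let _ := mu_sf in mu.
HB.instance Definition _ := Measure.on sfmeasure.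
HB.instance Definition _ := Measure_isSigmaFinite.Build _ _ _ sfmeasure mu_sf.

End sigma_finite_measure_of.

Section measure_of_sections.
Local Open Scope ereal_scope.
Context d1 d2 (T1 : measurableType d1) (T2 : measurableType d2) (R : realType).
Variables (m1 : {measure set T1 -> \bar R}) (m2 : {measure set T2 -> \bar R}).
Hypotheses (m1_sf : sigma_finite setT m1) (m2_sf : sigma_finite setT m2).

Lemma measurable_fun_measure_xsection (A : set (T1 * T2)) :
  measurable A -> measurable_fun setT (fun x => m2 (xsection A x)).
Proof. by move=> mA; exact: (measurable_fun_xsection (sfmeasure m2_sf) mA). Qed.

Lemma integral_measure_xsection (A : set (T1 * T2)) : measurable A ->
  \int[m1]_x m2 (xsection A x) = \int[m2]_y m1 (ysection A y).
Proof.
move=> mA.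
have := indic_fubini_tonelli (sfmeasure m1_sf) (sfmeasure m2_sf) mA.
by rewrite indic_fubini_tonelli_FE // indic_fubini_tonelli_GE.
Qed.

End measure_of_sections.

Section persistence.
Variable R : realType.
Local Notation T2 := (R * R)%type.
Local Notation T4 := (T2 * T2)%type.

Lemma measurable_Xbar : measurable (@Xbar R).
Proof. exact/measurable_bool/measurable_fun_ler. Qed.

Lemma measurable_Xopen : measurable (@Xopen R).
Proof. exact/measurable_bool/measurable_fun_ltr. Qed.

Lemma measurable_Rx (x : R) : measurable (Rx x).
Proof. by apply: measurableX; exact: measurable_itv. Qed.

Definition square (n : nat) : set T2 :=
  `[- n%:R, n%:R]%classic `*` `[- n%:R, n%:R]%classic.

Lemma measurable_square n : measurable (square n).
Proof. by apply: measurableX; exact: measurable_itv. Qed.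

Lemma compact_square n : compact (square n).
Proof. by apply: compact_setX; exact: segment_compact. Qed.

Lemma square_cover (z : T2) : exists N, forall n, (N <= n)%N -> square n z.
Proof.
exists (Num.bound (`|z.1| + `|z.2|)) => n Nn.
have /ltW zN := archi_boundP (addr_ge0 (normr_ge0 z.1) (normr_ge0 z.2)).
have /(le_trans zN) zn : (Num.bound (`|z.1| + `|z.2|))%:R <= n%:R :> R by rewrite ler_nat.
by split; rewrite /= in_itv /= -ler_norml; apply: le_trans zn; rewrite ?lerDl ?lerDr.
Qed.

Lemma radon_sigma_finite (mu : {measure set T2 -> \bar R}) :
  is_radon_Xbar mu -> sigma_finite setT mu.
Proof.
move=> [_ mu_cpt]; exists square.
  by apply/seteqP; split=> // z _; have [N /(_ N (leqnn N))] := square_cover z; exists N.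
by move=> n; split; [exact: measurable_square | exact/mu_cpt/compact_square].
Qed.

Lemma plan_sigma_finite (mu nu : {measure set T2 -> \bar R})
    (pi : {measure set T4 -> \bar R}) :
  plan mu nu pi -> sigma_finite setT pi.
Proof.
move=> [_ [pi_cpt _]]; exists (fun n => square n `*` square n).
  apply/seteqP; split=> // w _.
  have [N1 sq1] := square_cover w.1; have [N2 sq2] := square_cover w.2.
  exists (N1 + N2)%N => //.
  by split; [apply: sq1; exact: leq_addr | apply: sq2; exact: leq_addl].
move=> n; split; first by apply: measurableX; exact: measurable_square.
by apply/pi_cpt/compact_setX; exact: compact_square.
Qed.

Lemma in_D1_far_from_diagonal_lty (D : {measure set T2 -> \bar R}) :
  in_D1 D -> (D [set z : T2 | 2 <= z.1 - z.2]%R < +oo)%E.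
Proof.
move=> [_ D_int].
have mddiag : measurable_fun setT (fun z : T2 => (ddiag z)%:E).
  apply/measurable_EFinP/measurable_funM => //; apply: measurableT_comp => //.
  exact: measurable_funB.
have := le_integral_abse D measurable_Xbar (measurable_funTS mddiag) (@ltr01 R).
under eq_integral do rewrite gee0_abs ?lee_fin ?divr_ge0//.
rewrite mul1e => /le_lt_trans/(_ D_int); apply: le_lt_trans; apply: le_measure.
- rewrite inE; apply: measurable_bool; apply: measurable_fun_ler => //.
  exact: measurable_funB.
- rewrite inE; apply: (@measurable_lee _ _ _ _ measurable_Xbar (cst 1%E)) => //.
  exact/measurable_funTS/measurableT_comp.
- move=> z /= far; split; rewrite /Xbar /ddiag /=; first lra.
  by rewrite lee_fin ger0_norm distrC ger0_norm; lra.
Qed.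

Lemma betti_lty (D : {measure set T2 -> \bar R}) (x : R) :
  in_D1 D -> (betti D x < +oo)%E.
Proof.
move=> D1; have far_lty := in_D1_far_from_diagonal_lty D1.
set K := `[x - 2, x + 2]%classic `*` `[x - 2, x + 2]%classic.
set F := [set z : T2 | 2 <= z.1 - z.2].
have mK : measurable K by apply: measurableX; exact: measurable_itv.
have mF : measurable F.
  by apply/measurable_bool/measurable_fun_ler => //; exact: measurable_funB.
have RxKF : Rx x `<=` K `|` F.
  move=> [b d]; rewrite /Rx /= !in_itv /= andbT => -[xb dx].
  have [bd|] := leP (b - d) 2; last by right; rewrite /F /=; lra.
  by left; split; rewrite /= in_itv /=; apply/andP; split; lra.
have mKF : measurable (K `|` F) by exact: measurableU.
have := le_measure D (mem_set (measurable_Rx x)) (mem_set mKF) RxKF.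
rewrite /betti => /le_lt_trans; apply.
apply: (le_lt_trans (measureU2 _ mK mF)); rewrite lte_add_pinfty//.
by apply: D1.1.2; apply: compact_setX; exact: segment_compact.
Qed.

Definition Rx_open (x : R) : set T2 := Rx x `&` @Xopen R.

Lemma Rx_openP (x : R) (z : T2) :
  Rx_open x z <-> [/\ x <= z.1, z.2 <= x & z.2 < z.1].
Proof.
rewrite /Rx_open /Rx /Xopen /= !in_itv /= andbT.
by split=> [[[-> ->] ->]|[-> -> ->]].
Qed.

Lemma RxE (x : R) : Rx x = Rx_open x `|` [set (x, x)].
Proof.
apply/seteqP; split=> [[b d]|[b d] [/Rx_openP[xb dx _]|[-> ->]]].
- rewrite /Rx /= !in_itv /= andbT => -[xb dx].
  have [db|bd] := ltP d b; first by left; apply/Rx_openP.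
  by right; congr pair; apply/eqP; rewrite eq_le ?xb ?dx //=; lra.
- by rewrite /Rx /= !in_itv /= andbT.
- by rewrite /Rx /= !in_itv /= andbT lexx.
Qed.

Lemma measurable_Rx_open (x : R) : measurable (Rx_open x).
Proof. exact: measurableI (measurable_Rx x) measurable_Xopen. Qed.

Lemma Rx_open_sub_Xopen (x : R) : Rx_open x `<=` @Xopen R.
Proof. exact: subIsetr. Qed.

Lemma Rx_open_sub_Xbar (x : R) : Rx_open x `<=` @Xbar R.
Proof. by move=> z /Rx_open_sub_Xopen; exact: ltW. Qed.

Definition Rx_open_graph : set (R * T2) := [set p | Rx_open p.1 p.2].

Lemma measurable_Rx_open_graph : measurable Rx_open_graph.
Proof.
rewrite (_ : Rx_open_graph = [set p | [&& p.1 <= p.2.1, p.2.2 <= p.1 & p.2.2 < p.2.1]]).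
  apply/measurable_bool/measurable_and; last apply: measurable_and.
  - by apply: measurable_fun_ler => //; exact: measurableT_comp.
  - by apply: measurable_fun_ler => //; exact: measurableT_comp.
  - by apply: measurable_fun_ltr; exact: measurableT_comp.
apply/seteqP; split=> p; rewrite /Rx_open_graph /= Rx_openP.
  by move=> [-> -> ->].
by move=> /and3P.
Qed.

Definition diagonal_graph : set (R * T2) := [set p | p.2 = (p.1, p.1)].

Lemma xsection_diagonal_graph (x : R) : xsection diagonal_graph x = [set (x, x)].
Proof. by apply/seteqP; split=> z; rewrite /xsection /= inE. Qed.

Lemma measurable_diagonal_graph : measurable diagonal_graph.
Proof.
rewrite (_ : diagonal_graph = [set p | (p.2.1 == p.1) && (p.2.2 == p.1)]).
  apply/measurable_bool/measurable_and.
  - by apply: measurable_fun_eqr => //; exact: measurableT_comp.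
  - by apply: measurable_fun_eqr => //; exact: measurableT_comp.
apply/seteqP; split=> [[x [b d]]|[x [b d]]] /=.
  by case=> -> ->; rewrite !eqxx.
by case/andP=> /eqP-> /eqP->.
Qed.

Lemma measurable_diagonal_point (x : R) : measurable [set (x, x)].
Proof.
rewrite -xsection_diagonal_graph.
exact: measurable_xsection measurable_diagonal_graph.
Qed.

Section diagonal_points.
Variables (mu : {measure set T2 -> \bar R}) (mu_sf : sigma_finite setT mu).

Lemma measurable_fun_measure_diagonal_point :
  measurable_fun setT (fun x : R => mu [set (x, x)]).
Proof.
rewrite (_ : (fun x => _) = fun x => mu (xsection diagonal_graph x)).
  exact: (measurable_fun_measure_xsection mu_sf measurable_diagonal_graph).
by apply/funext => x; rewrite xsection_diagonal_graph.
Qed.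

Lemma integral_measure_diagonal_point : (\int[lebesgue_measure]_x mu [set (x, x)] = 0)%E.
Proof.
under eq_integral do rewrite -xsection_diagonal_graph.
rewrite (integral_measure_xsection (sigma_finiteT lebesgue_measure) mu_sf
  measurable_diagonal_graph).
apply: integral0_eq => z _; apply/eqP.
rewrite -measure_le0 -(lebesgue_measure_set1 z.1); apply: le_measure; rewrite ?inE //.
  exact: measurable_ysection measurable_diagonal_graph.
by move=> x; rewrite /ysection /= inE /diagonal_graph /= => ->.
Qed.

End diagonal_points.

Definition Rx_open_mismatch : set (R * T4) :=
  [set p | ((Rx_open p.1 `*` @Xbar R) `+` (@Xbar R `*` Rx_open p.1)) p.2].

Lemma xsection_Rx_open_mismatch (x : R) : xsection Rx_open_mismatch x =
  (Rx_open x `*` @Xbar R) `+` (@Xbar R `*` Rx_open x).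
Proof. by apply/seteqP; split=> w; rewrite /xsection /= inE. Qed.

Lemma measurable_Rx_open_mismatch : measurable Rx_open_mismatch.
Proof.
pose G1 := (fun p : R * T4 => (p.1, p.2.1)) @^-1` Rx_open_graph.
pose G2 := (fun p : R * T4 => (p.1, p.2.2)) @^-1` Rx_open_graph.
pose X1 := (fun p : R * T4 => p.2.1) @^-1` @Xbar R.
pose X2 := (fun p : R * T4 => p.2.2) @^-1` @Xbar R.
have -> : Rx_open_mismatch = (G1 `&` X2) `+` (X1 `&` G2) by [].
have mG (f : T4 -> T2) : measurable_fun setT f ->
    measurable ((fun p : R * T4 => (p.1, f p.2)) @^-1` Rx_open_graph).
  move=> mf; apply: measurable_preimageT measurable_Rx_open_graph.
  by apply: measurable_fun_pair => //; exact: measurableT_comp.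
have mX (f : T4 -> T2) : measurable_fun setT f ->
    measurable ((fun p : R * T4 => f p.2) @^-1` @Xbar R).
  by move=> mf; apply: measurable_preimageT measurable_Xbar; exact: measurableT_comp.
by apply: measurableU; apply: measurableD; apply: measurableI; apply: mG || apply: mX.
Qed.

Local Open Scope ereal_scope.

Lemma plan_Rx_open_le (D D' : {measure set T2 -> \bar R})
    (pi : {measure set T4 -> \bar R}) (x : R) : plan D D' pi ->
  D (Rx_open x) <= D' (Rx_open x) + pi (xsection Rx_open_mismatch x) /\
  D' (Rx_open x) <= D (Rx_open x) + pi (xsection Rx_open_mismatch x).
Proof.
move=> [_ [_ [pi_fst pi_snd]]].
have [mA AX] := (measurable_Rx_open x, @Rx_open_sub_Xopen x).
rewrite -(pi_fst _ mA AX) -(pi_snd _ mA AX) xsection_Rx_open_mismatch.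
have mAX : measurable (Rx_open x `*` @Xbar R) by exact: measurableX measurable_Xbar.
have mXA : measurable (@Xbar R `*` Rx_open x) by exact: measurableX measurable_Xbar _.
by split; [|rewrite setYC]; exact: measure_le_addY.
Qed.

Lemma betti_le_Rx_open (mu nu : {measure set T2 -> \bar R}) (x : R) (e : \bar R) :
  mu (Rx_open x) <= nu (Rx_open x) + e ->
  betti mu x <= betti nu x + e + mu [set (x, x)].
Proof.
move=> mu_nu; rewrite /betti [in leLHS]RxE.
apply: (le_trans (measureU2 mu (measurable_Rx_open x) (measurable_diagonal_point x))).
rewrite leeD2r // (le_trans mu_nu) // leeD2r // le_measure ?inE //.
- exact: measurable_Rx_open.
- exact: measurable_Rx.
- exact: subIsetl.
Qed.

Lemma abs_betti_sub_le (D D' : {measure set T2 -> \bar R})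
    (pi : {measure set T4 -> \bar R}) (x : R) :
  in_D1 D -> in_D1 D' -> plan D D' pi ->
  `|betti D x - betti D' x| <=
    pi (xsection Rx_open_mismatch x) + D [set (x, x)] + D' [set (x, x)].
Proof.
move=> D1 D'1 /(plan_Rx_open_le x)[/betti_le_Rx_open DD' /betti_le_Rx_open D'D].
apply: lee_dist; rewrite ?ge0_fin_numE ?betti_lty //.
- by apply: (le_trans DD'); rewrite !addeA leeDl.
- by apply: (le_trans D'D); rewrite !addeA addeAC leeDl.
Qed.

Lemma Rx_open_diff_sub (z z' : T2) :
  [set x | Rx_open x z /\ ~ Rx_open x z'] `<=`
  `[z.2, z'.2]%classic `|` `[z'.1, z.1]%classic.
Proof.
move=> x [/Rx_openP[xb dx _] xz']; rewrite /= !in_itv /= xb dx /=.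
have [xd'|d'x] := leP x z'.2; first by left.
have [b'x|xb'] := leP z'.1 x; first by right.
by exfalso; apply: xz'; apply/Rx_openP; split; rewrite ?ltW // (lt_trans d'x).
Qed.

Lemma itvcc_sub_minmax (a c : R) :
  `[a, c]%classic `|` `[c, a]%classic `<=` `[Num.min a c, Num.max a c]%classic.
Proof.
move=> x; rewrite /= !in_itv /= => -[|] /andP[lo hi].
  by rewrite ge_min lo le_max hi orbT.
by rewrite ge_min lo orbT le_max hi.
Qed.

Lemma lebesgue_measure_minmax (a c : R) :
  lebesgue_measure `[Num.min a c, Num.max a c]%classic = `|a - c|%:E.
Proof.
rewrite lebesgue_measure_itv /= lte_fin.
have [ac|ca] := leP a c; last first.
  by rewrite ca -EFinD ger0_norm // subr_ge0 ltW.
case: ltP => [_|ca]; first by rewrite -EFinD distrC ger0_norm // subr_ge0.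
have -> : a = c by apply/eqP; rewrite eq_le ac ca.
by rewrite subrr normr0.
Qed.

Lemma lebesgue_ysection_Rx_open_mismatch_le (w : T4) :
  lebesgue_measure (ysection Rx_open_mismatch w) <= (2 * dinf w.1 w.2)%:E.
Proof.
case: w => z z'.
pose I2 := `[Num.min z.2 z'.2, Num.max z.2 z'.2]%classic.
pose I1 := `[Num.min z.1 z'.1, Num.max z.1 z'.1]%classic.
have mI (a c : R) : measurable `[a, c]%classic by exact: measurable_itv.
have sub : ysection Rx_open_mismatch (z, z') `<=` I2 `|` I1.
  move=> x; rewrite /ysection /= inE /Rx_open_mismatch /=.
  move=> [[[zx _] nz'x]|[[_ z'x] nzx]].
  - have /Rx_open_diff_sub[] : Rx_open x z /\ ~ Rx_open x z'.
      by split=> // z'x; apply: nz'x; split=> //; exact: Rx_open_sub_Xbar zx.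
    + by move=> h; left; apply: itvcc_sub_minmax; left.
    + by move=> h; right; apply: itvcc_sub_minmax; right.
  - have /Rx_open_diff_sub[] : Rx_open x z' /\ ~ Rx_open x z.
      by split=> // zx; apply: nzx; split=> //; exact: Rx_open_sub_Xbar z'x.
    + by move=> h; left; apply: itvcc_sub_minmax; right.
    + by move=> h; right; apply: itvcc_sub_minmax; left.
have mY := measurable_ysection (z, z') measurable_Rx_open_mismatch.
have mI21 : measurable (I2 `|` I1) by apply: measurableU; exact: mI.
apply: (le_trans (le_measure lebesgue_measure (mem_set mY) (mem_set mI21) sub)).
apply: (le_trans (measureU2 lebesgue_measure (mI _ _) (mI _ _))).
rewrite /= !lebesgue_measure_minmax -EFinD lee_fin /dinf mulr2n mulrDl mul1r addrC.
by apply: lerD; rewrite le_max lexx ?orbT.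
Qed.

Lemma measurable_dinf : measurable_fun setT (fun w : T4 => dinf w.1 w.2).
Proof.
by apply: measurable_maxr; apply: measurableT_comp => //;
  apply: measurable_funB; apply: measurableT_comp.
Qed.

Lemma integral_lebesgue_ysection_Rx_open_mismatch_le (pi : {measure set T4 -> \bar R}) :
  \int[pi]_w lebesgue_measure (ysection Rx_open_mismatch w) <=
    2%:E * \int[pi]_(w in @Xbar2 R) (dinf w.1 w.2)%:E.
Proof.
have mXbar2 : measurable (@Xbar2 R) by exact: measurableX measurable_Xbar measurable_Xbar.
rewrite -ge0_integralZl_EFin //; last 2 first.
- by move=> w _; rewrite lee_fin le_max normr_ge0.
- by apply/measurable_EFinP; exact: measurable_funTS measurable_dinf.
rewrite integral_mkcond; apply: le_ge0_integral => // w.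
rewrite /patch; case: ifPn => [_|/negP w_Xbar2].
  exact: lebesgue_ysection_Rx_open_mismatch_le.
rewrite (_ : ysection _ _ = set0) ?measure0 //; apply/seteqP; split => // x.
rewrite /ysection /= inE; case: w w_Xbar2 => z z' nX.
by move=> [[[/Rx_open_sub_Xbar zX z'X] _]|[[zX /Rx_open_sub_Xbar z'X] _]];
  apply: nX; rewrite inE.
Qed.

Lemma betti_L1_le_plan (D D' : {measure set T2 -> \bar R})
    (pi : {measure set T4 -> \bar R}) :
  in_D1 D -> in_D1 D' -> plan D D' pi ->
  \int[lebesgue_measure]_x `|betti D x - betti D' x| <=
    2%:E * \int[pi]_(w in @Xbar2 R) (dinf w.1 w.2)%:E.
Proof.
move=> D1 D'1 pi_plan.
have [D_sf D'_sf] := (radon_sigma_finite D1.1, radon_sigma_finite D'1.1).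
have pi_sf := plan_sigma_finite pi_plan.
have leb_sf := sigma_finiteT (@lebesgue_measure R).
have mM := measurable_fun_measure_xsection pi_sf measurable_Rx_open_mismatch.
apply: (le_trans (le_ge0_integral lebesgue_measure (fun x => abse_ge0 _)
  (fun x => abs_betti_sub_le x D1 D'1 pi_plan))).
rewrite ge0_integralD //; last 3 first.
- by move=> x _; exact: adde_ge0.
- exact: emeasurable_funD mM (measurable_fun_measure_diagonal_point D_sf).
- exact: measurable_fun_measure_diagonal_point D'_sf.
rewrite ge0_integralD //; last exact: measurable_fun_measure_diagonal_point D_sf.
rewrite !integral_measure_diagonal_point // !adde0.
rewrite (integral_measure_xsection leb_sf pi_sf measurable_Rx_open_mismatch).
exact: integral_lebesgue_ysection_Rx_open_mismatch_le.
Qed.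

End persistence.

Local Open Scope ereal_scope.

Theorem mainTheorem7 (R : realType)
  (D D' : {measure set (R * R) -> \bar R})
  (HD : in_D1 D) (HD' : in_D1 D') :
  \int[lebesgue_measure]_x `|betti D x - betti D' x| <= 2%:E * d1 D D'.
Proof.
rewrite /d1 -ereal_inf_pZl //; apply: le_ereal_inf_tmp => _ [_ [pi [pi_plan ->]] <-].
exact: betti_L1_le_plan.
Qed.
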